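(* Let $X$ be any one of the random Fibonacci subshift $X_{\vartheta_1}$, the random tribonacci subshift $X_\tau$, or the degree-$m$ random metallic mean subshift $X_{\vartheta_m}$ ($m\ge2$). Then $X$ is semi-mixing with respect to the set $\mathcal{S}=\{a\}$ of length-one words.
   Context: For a random substitution $\vartheta$ (a map assigning to each letter a non-empty finite set of non-empty words, extended to words via set concatenation $\vartheta(w_1\cdots w_k)=\vartheta(w_1)\cdots\vartheta(w_k)$), a word is $\vartheta$-legal if it is a subword of some word in $\vartheta^k(a)$ for some $k\ge0$ and letter $a$. $X_\vartheta$ is the set of bi-infinite sequences all of whose finite subwords are $\vartheta$-legal; $\mathcal{L}$ is its language (set of finite subwords of its elements), $\mathcal{L}^\ell$ those of length $\ell$. A subshift is semi-mixing with respect to $\mathcal{S}\subsetneq\mathcal{L}^\ell$ if for every $w\in\mathcal{L}$ there is $N$ such that for every $n\ge N$ there exist a word $u$ of length $n$ and $s\in\mathcal{S}$ with $wus\in\mathcal{L}$. $\vartheta_1\colon a\mapsto\{ab,ba\},\ b\mapsto\{a\}$; $\tau\colon a\mapsto\{ab,ba\},\ b\mapsto\{ac,ca\},\ c\mapsto\{a\}$; $\vartheta_m\colon a\mapsto\{a^iba^{m-i}\mid0\le i\le m\},\ b\mapsto\{a\}$. *)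

From HB Require Import structures.
From mathcomp Require Import all_boot all_order all_algebra.
From Stdlib Require List.
Set Implicit Arguments. Unset Strict Implicit. Unset Printing Implicit Defensive.
Import GRing.Theory Num.Theory.

Definition rsubst (A : Type) := A -> seq (seq A).

(* v \in theta(w), where theta(w1...wk) = theta(w1)...theta(wk) (set concatenation). *)
Fixpoint img (A : Type) (th : rsubst A) (w v : seq A) : Prop :=
  match w with
  | [::] => v = [::]
  | a :: w' => exists u v', List.In u (th a) /\ v = u ++ v' /\ img th w' v'
  end.

(* v \in theta^k(a), with theta extended to sets of words by union. *)
Fixpoint img_iter (A : Type) (th : rsubst A) (k : nat) (a : A) (v : seq A) : Prop :=
  match k with
  | 0 => v = [:: a]
  | k'.+1 => exists u, img_iter th k' a u /\ img th u v
  end.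

Definition subword (A : Type) (w u : seq A) : Prop :=
  exists p s, u = p ++ w ++ s.

Definition legal (A : Type) (th : rsubst A) (w : seq A) : Prop :=
  exists k a u, img_iter th k a u /\ subword w u.

Definition window (A : Type) (x : int -> A) (i : int) (n : nat) : seq A :=
  [seq x (i + (j%:Z))%R | j <- iota 0 n].

Definition in_subshift (A : Type) (th : rsubst A) (x : int -> A) : Prop :=
  forall i n, legal th (window x i n).

Definition lang (A : Type) (th : rsubst A) (w : seq A) : Prop :=
  exists x i, in_subshift th x /\ w = window x i (size w).

(* Semi-mixing with respect to S, a proper subset of L^l. *)
Definition semi_mixing (A : Type) (th : rsubst A) (l : nat) (S : seq A -> Prop) : Prop :=
  ((forall s, S s -> lang th s /\ size s = l) /\
   (exists v, lang th v /\ size v = l /\ ~ S v)) /\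
  (forall w, lang th w ->
     exists N, forall n, N <= n ->
       exists u s, size u = n /\ S s /\ lang th (w ++ u ++ s)).

Inductive ab := la | lb.
Inductive abc := ta | tb | tc.

Definition fib_rs : rsubst ab := fun x =>
  match x with
  | la => [:: [:: la; lb]; [:: lb; la]]
  | lb => [:: [:: la]]
  end.

Definition trib_rs : rsubst abc := fun x =>
  match x with
  | ta => [:: [:: ta; tb]; [:: tb; ta]]
  | tb => [:: [:: ta; tc]; [:: tc; ta]]
  | tc => [:: [:: ta]]
  end.

Definition metal_rs (m : nat) : rsubst ab := fun x =>
  match x with
  | la => [seq nseq i la ++ lb :: nseq (m - i) la | i <- iota 0 m.+1]
  | lb => [:: [:: la]]
  end.

From mathcomp Require Import all_boot all_algebra zify.
From Stdlib Require List.
Set Implicit Arguments. Unset Strict Implicit. Unset Printing Implicit Defensive.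
Import GRing.Theory.

(* Each substitution has two deterministic realisations sL, sR and a legal
   two-letter word l r with sL(l) ending in l and sR(r) starting with r, so the
   words sL^n(l) sR^n(r) grow in both directions towards a point of X_theta in
   which every letter occurs; applying sR^k to it shows that every legal word
   lies in the language.  Now let w be a subword of theta^(k+1)(c) and extend c
   to a legal word c y of length n + 2.  Every sR(e) can be realised, keeping
   its length, with the letter a at any prescribed position, so the image of y
   under theta^(k+1) can be chosen with a exactly n letters after w. *)

Definition subst_seq (A : Type) (s : A -> seq A) (w : seq A) : seq A :=
  flatten (map s w).

Lemma subst_seq_cat (A : Type) (s : A -> seq A) u v :
  subst_seq s (u ++ v) = subst_seq s u ++ subst_seq s v.
Proof. by rewrite /subst_seq map_cat flatten_cat. Qed.

Lemma iter_subst_seq_cat (A : Type) (s : A -> seq A) k u v :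
  iter k (subst_seq s) (u ++ v) = iter k (subst_seq s) u ++ iter k (subst_seq s) v.
Proof. by elim: k => //= k ->; rewrite subst_seq_cat. Qed.

Lemma size_subst_seq (A : Type) (s : A -> seq A) w :
  (forall e, 0 < size (s e)) -> size w <= size (subst_seq s w).
Proof.
move=> s_gt0; elim: w => //= e w IHw.
by rewrite /subst_seq /= size_cat -/(subst_seq s w); have := s_gt0 e; lia.
Qed.

Lemma size_iter_subst_seq (A : Type) (s : A -> seq A) k w :
  (forall e, 0 < size (s e)) -> size w <= size (iter k (subst_seq s) w).
Proof.
move=> s_gt0; elim: k => //= k IHk.
exact: leq_trans IHk (size_subst_seq _ s_gt0).
Qed.

Lemma subword_trans (A : Type) (u v w : seq A) :
  subword u v -> subword v w -> subword u w.
Proof.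
by move=> [p [s ->]] [p' [s' ->]]; exists (p' ++ p), (s ++ s'); rewrite !catA.
Qed.

Lemma size_window (A : Type) (x : int -> A) i n : size (window x i n) = n.
Proof. by rewrite size_map size_iota. Qed.

Lemma window_cons (A : Type) (x : int -> A) i n :
  window x i n.+1 = x i :: window x (i + 1)%R n.
Proof.
rewrite /window /= addr0 -[iota 1 n]/(iota (1 + 0) n) iotaDl -map_comp; congr cons.
by apply: eq_map => j /=; rewrite PoszD addrA.
Qed.

Section Images.
Variables (A : Type) (th : rsubst A).

Fixpoint img_pow k (w v : seq A) : Prop :=
  match k with
  | 0 => v = w
  | k'.+1 => exists u, img_pow k' w u /\ img th u v
  end.

Lemma img_cat w1 w2 v1 v2 :
  img th w1 v1 -> img th w2 v2 -> img th (w1 ++ w2) (v1 ++ v2).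
Proof.
elim: w1 v1 => [|e w IHw] v1 /=; first by move->.
move=> [u [v' [u_in [-> img_w]]]] img2.
by exists u, (v' ++ v2); rewrite catA; split=> //; split=> //; apply: IHw.
Qed.

Lemma img_pow_cat k w1 w2 v1 v2 :
  img_pow k w1 v1 -> img_pow k w2 v2 -> img_pow k (w1 ++ w2) (v1 ++ v2).
Proof.
elim: k v1 v2 => [|k IHk] v1 v2 /=; first by move=> -> ->.
move=> [u1 [pow1 img1]] [u2 [pow2 img2]].
by exists (u1 ++ u2); split; [apply: IHk | apply: img_cat].
Qed.

Lemma img_pow_add k1 k2 w u v :
  img_pow k1 w u -> img_pow k2 u v -> img_pow (k2 + k1) w v.
Proof.
move=> pow1; elim: k2 v => [|k IHk] v /=; first by move->.
by move=> [u' [pow2 img2]]; exists u'; split; [apply: IHk|].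
Qed.

Lemma img_iterE k a v : img_iter th k a v <-> img_pow k [:: a] v.
Proof.
elim: k v => [|k IHk] v //=.
by split=> -[u [pow_u img_u]]; exists u; split=> //; apply/IHk.
Qed.

Lemma legal_subword u w : legal th w -> subword u w -> legal th u.
Proof.
move=> [k [a [t [pow_t sub_w]]]] sub_u.
by exists k, a, t; split=> //; apply: subword_trans sub_u sub_w.
Qed.

Lemma legal_letter c : legal th [:: c].
Proof. by exists 0, c, [:: c]; split=> //; exists [::], [::]. Qed.

Lemma lang_legal w : lang th w -> legal th w.
Proof. by move=> [x [i [x_in ->]]]. Qed.

Section Realisation.
Variable s : A -> seq A.
Hypothesis s_in : forall e, List.In (s e) (th e).

Lemma img_subst_seq w : img th w (subst_seq s w).
Proof. by elim: w => //= e w IHw; exists (s e), (subst_seq s w). Qed.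

Lemma img_pow_iter k w : img_pow k w (iter k (subst_seq s) w).
Proof.
elim: k => //= k IHk.
by exists (iter k (subst_seq s) w); split=> //; apply: img_subst_seq.
Qed.

Lemma img_pow_context k p q u v : img_pow k u v ->
  img_pow k (p ++ u ++ q)
    (iter k (subst_seq s) p ++ v ++ iter k (subst_seq s) q).
Proof. by move=> pow_u; do ![apply: img_pow_cat => //]; apply: img_pow_iter. Qed.

Lemma legal_img w v : legal th w -> img th w v -> legal th v.
Proof.
move=> [k [c [t [pow_t [p [q def_t]]]]]] img_wv; subst t.
exists k.+1, c, (subst_seq s p ++ v ++ subst_seq s q).
split; last by exists (subst_seq s p), (subst_seq s q).
exists (p ++ w ++ q); split=> //.
by apply: img_cat; [apply: img_subst_seq | apply: img_cat => //; apply: img_subst_seq].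
Qed.

Lemma legal_img_pow k w v : legal th w -> img_pow k w v -> legal th v.
Proof.
move=> legal_w; elim: k v => [|k IHk] v /=; first by move->.
by move=> [u [pow_u img_u]]; apply: legal_img (IHk _ pow_u) img_u.
Qed.

Variables (d a : A).
Hypothesis s_gt0 : forall e, 0 < size (s e).
Hypothesis s_flexible : forall e j, j < size (s e) ->
  exists u, List.In u (th e) /\ size u = size (s e) /\ nth d u j = a.

Lemma img_letter_at y j : j < size y ->
  exists y', img th y y' /\ j < size y' /\ nth d y' j = a.
Proof.
elim: y j => [|e y IHy] j //= lt_j.
have [lt_je | le_ej] := ltnP j (size (s e)).
  have [u [u_in [size_u nth_u]]] := s_flexible lt_je.
  exists (u ++ subst_seq s y); split.
    by exists u, (subst_seq s y); split=> //; split=> //; apply: img_subst_seq.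
  by rewrite size_cat nth_cat size_u lt_je -size_u nth_u; split=> //; lia.
have [|y' [img_y [lt_jy nth_y]]] := IHy (j - size (s e)).
  by have := s_gt0 e; lia.
exists (s e ++ y'); split; first by exists (s e), y'.
by rewrite size_cat nth_cat [j < size (s e)]ltnNge le_ej; split=> //; lia.
Qed.

Lemma img_pow_letter_at k y j : j < size y ->
  exists y', img_pow k.+1 y y' /\ j < size y' /\ nth d y' j = a.
Proof.
move=> lt_jy; have := size_iter_subst_seq k y s_gt0.
move=> /(leq_trans lt_jy) /img_letter_at [y' [img_y lt_jy']].
by exists y'; split=> //; exists (iter k (subst_seq s) y); split=> //; apply: img_pow_iter.
Qed.

End Realisation.
End Images.

Section NestedWords.
Variables (A : Type) (d : A) (w0 : seq A) (L R : nat -> seq A).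

Fixpoint nest n : seq A := if n is n'.+1 then L n' ++ nest n' ++ R n' else w0.

(* [w0] starts at position [nest_left n] of [nest n]; positions of [nest n]
   relative to that origin range over [-nest_left n, nest_right n). *)
Fixpoint nest_left n : nat := if n is n'.+1 then size (L n') + nest_left n' else 0.

Fixpoint nest_right n : nat :=
  if n is n'.+1 then nest_right n' + size (R n') else size w0.

Lemma size_nest n : size (nest n) = nest_left n + nest_right n.
Proof. by elim: n => //= n IHn; rewrite !size_cat IHn; lia. Qed.

Lemma nest_left_mono m n : m <= n -> nest_left m <= nest_left n.
Proof. by move/subnK <-; elim: (n - m) => //= e IHe; lia. Qed.

Lemma nest_right_mono m n : m <= n -> nest_right m <= nest_right n.
Proof. by move/subnK <-; elim: (n - m) => //= e IHe; lia. Qed.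

Lemma nth_nest_stable m n (j : int) : m <= n ->
  (- (nest_left m)%:Z <= j)%R -> (j < (nest_right m)%:Z)%R ->
  nth d (nest n) (absz ((nest_left n)%:Z + j)%R)
  = nth d (nest m) (absz ((nest_left m)%:Z + j)%R).
Proof.
move/subnK <- => lo hi; elim: (n - m) => [|e IHe] //=.
have := nest_left_mono (leq_addl e m); have := nest_right_mono (leq_addl e m).
have := size_nest (e + m); move: IHe.
set o := nest_left (e + m); set w := nest (e + m) => IHe size_w le_r le_o.
have -> : absz ((size (L (e + m)) + o)%:Z + j)%R
          = size (L (e + m)) + absz (o%:Z + j)%R by lia.
rewrite nth_cat ltnNge leq_addr /= addKn nth_cat.
by have -> : absz (o%:Z + j)%R < size w by lia.
Qed.

Hypotheses (L_gt0 : forall n, 0 < size (L n)) (R_gt0 : forall n, 0 < size (R n)).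

Lemma leq_nest_left n : n <= nest_left n.
Proof. by elim: n => //= n IHn; have := L_gt0 n; lia. Qed.

Lemma leq_nest_right n : n <= nest_right n.
Proof. by elim: n => //= n IHn; have := R_gt0 n; lia. Qed.

(* By [leq_nest_left] and [leq_nest_right], [nest (absz i).+1] covers position [i]. *)
Definition nest_seq (i : int) : A :=
  nth d (nest (absz i).+1) (absz ((nest_left (absz i).+1)%:Z + i)%R).

Lemma nest_seqE m (i : int) :
  (- (nest_left m)%:Z <= i)%R -> (i < (nest_right m)%:Z)%R ->
  nest_seq i = nth d (nest m) (absz ((nest_left m)%:Z + i)%R).
Proof.
move=> lo hi; pose n := maxn m (absz i).+1.
have := leq_nest_left (absz i).+1; have := leq_nest_right (absz i).+1 => ge_r ge_l.
rewrite /nest_seq -(nth_nest_stable (m := (absz i).+1) (n := n)) ?leq_maxr; try lia.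
by rewrite (nth_nest_stable (m := m) (n := n)) ?leq_maxl.
Qed.

Lemma window_nest_seq m (i : int) n :
  (- (nest_left m)%:Z <= i)%R -> (i + n%:Z <= (nest_right m)%:Z)%R ->
  window nest_seq i n = take n (drop (absz ((nest_left m)%:Z + i)%R) (nest m)).
Proof.
move=> lo hi; rewrite -(map_nth_iota d) ?size_nest; last by lia.
rewrite -[X in iota X]addn0 iotaDl -map_comp.
apply/eq_in_map => j; rewrite mem_iota => /andP[_ lt_jn] /=.
by rewrite (nest_seqE (m := m)); try lia; congr nth; lia.
Qed.

Lemma nest_seq_in_subshift (th : rsubst A) :
  (forall n, legal th (nest n)) -> in_subshift th nest_seq.
Proof.
move=> legal_nest i n; pose m := (absz i + n).+1.
have := leq_nest_left m; have := leq_nest_right m => ge_r ge_l.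
rewrite (window_nest_seq (m := m)); try lia.
apply: legal_subword (legal_nest m) _.
set q := absz _; exists (take q (nest m)), (drop n (drop q (nest m))).
by rewrite !cat_take_drop.
Qed.

Lemma lang_subword_nest (th : rsubst A) m w :
  (forall n, legal th (nest n)) -> subword w (nest m) -> lang th w.
Proof.
move=> legal_nest [p [q def_w]]; have := size_nest m; rewrite def_w !size_cat => size_m.
exists nest_seq, ((size p)%:Z - (nest_left m)%:Z)%R.
split; first exact: nest_seq_in_subshift.
rewrite (window_nest_seq (m := m)); try lia.
have -> : absz ((nest_left m)%:Z + ((size p)%:Z - (nest_left m)%:Z))%R = size p by lia.
by rewrite def_w drop_size_cat // take_size_cat.
Qed.

End NestedWords.

Section SemiMixing.
Variables (A : Type) (th : rsubst A) (sL sR : A -> seq A) (l r a b : A) (tl tr : seq A).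
Hypotheses (sL_in : forall e, List.In (sL e) (th e))
           (sR_in : forall e, List.In (sR e) (th e)).
Hypotheses (sL_gt0 : forall e, 0 < size (sL e)) (sR_gt0 : forall e, 0 < size (sR e)).
Hypotheses (sL_l : sL l = tl ++ [:: l]) (sR_r : sR r = r :: tr).
Hypotheses (tl_gt0 : 0 < size tl) (tr_gt0 : 0 < size tr) (legal_lr : legal th [:: l; r]).

Definition left_block n := iter n (subst_seq sL) tl.
Definition right_block n := iter n (subst_seq sR) tr.

Lemma left_block_gt0 n : 0 < size (left_block n).
Proof. exact: leq_trans tl_gt0 (size_iter_subst_seq _ _ sL_gt0). Qed.

Lemma right_block_gt0 n : 0 < size (right_block n).
Proof. exact: leq_trans tr_gt0 (size_iter_subst_seq _ _ sR_gt0). Qed.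

Definition fixed_word := nest [:: l; r] left_block right_block.

Lemma fixed_wordE n :
  fixed_word n = iter n (subst_seq sL) [:: l] ++ iter n (subst_seq sR) [:: r].
Proof.
elim: n => [|n IHn] //; rewrite /fixed_word /= -/(fixed_word n) IHn.
rewrite -(iterS n (subst_seq sL)) -(iterS n (subst_seq sR)) !iterSr.
have -> : subst_seq sL [:: l] = tl ++ [:: l] by rewrite /subst_seq /= cats0 sL_l.
have -> : subst_seq sR [:: r] = [:: r] ++ tr by rewrite /subst_seq /= cats0 sR_r.
by rewrite !iter_subst_seq_cat !catA.
Qed.

Lemma legal_fixed_word n : legal th (fixed_word n).
Proof.
rewrite fixed_wordE; apply: (legal_img_pow sL_in (k := n) legal_lr).
by rewrite -cat1s; apply: img_pow_cat; apply: img_pow_iter.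
Qed.

Hypothesis letter_in_fixed_word : forall c, exists m p q, fixed_word m = p ++ c :: q.

(* Applying [sR^k] around a realisation [v] of [c] turns the nested family
   [fixed_word (m + n)] into another nested family, one member of which contains [w]. *)
Lemma legal_lang w : legal th w -> lang th w.
Proof.
move=> [k [c [v [/img_iterE pow_v sub_w]]]].
have [m [p [q def_m]]] := letter_in_fixed_word c.
pose T := iter k (subst_seq sR).
pose L n := T (left_block (m + n)); pose R n := T (right_block (m + n)).
have pow_fixed n : img_pow th k (fixed_word (m + n)) (nest (T p ++ v ++ T q) L R n).
  elim: n => [|n IHn]; last by rewrite addnS; apply: (img_pow_context sR_in).
  by rewrite addn0 def_m -cat1s; apply: (img_pow_context sR_in).
apply: (@lang_subword_nest _ l (T p ++ v ++ T q) L R _ _ th 0).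
- by move=> n; apply: leq_trans (left_block_gt0 _) (size_iter_subst_seq _ _ sR_gt0).
- by move=> n; apply: leq_trans (right_block_gt0 _) (size_iter_subst_seq _ _ sR_gt0).
- move=> n; exact (legal_img_pow sR_in (legal_fixed_word (m + n)) (pow_fixed n)).
- by apply: subword_trans sub_w _; exists (T p), (T q).
Qed.

Hypothesis letter_in_img : forall c, exists c' p q, List.In (p ++ c :: q) (th c').

(* The extra step guarantees that the continuation of [c] is substituted at
   least once, which [img_pow_letter_at] needs. *)
Lemma legal_in_img_pow_letter w : legal th w ->
  exists k c p q, img_pow th k.+1 [:: c] (p ++ w ++ q).
Proof.
move=> [k [c [v [/img_iterE pow_v [p1 [q1 def_v]]]]]].
have [c' [p [q pq_in]]] := letter_in_img c.
pose T := iter k (subst_seq sR).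
have pow1 : img_pow th 1 [:: c'] (p ++ c :: q).
  by exists [:: c']; split=> //; exists (p ++ c :: q), [::]; rewrite cats0.
have powk : img_pow th k (p ++ c :: q) (T p ++ v ++ T q).
  by rewrite -cat1s; apply: (img_pow_context sR_in).
exists k, c', (T p ++ p1), (q1 ++ T q).
have -> : (T p ++ p1) ++ w ++ q1 ++ T q = T p ++ v ++ T q by rewrite def_v !catA.
by rewrite -addn1; apply: img_pow_add pow1 powk.
Qed.

Hypothesis b_neq_a : b <> a.
Hypothesis sR_flexible : forall e j, j < size (sR e) ->
  exists u, List.In u (th e) /\ size u = size (sR e) /\ nth l u j = a.

Theorem semi_mixing_letter : semi_mixing th 1 (fun s => s = [:: a]).
Proof.
split; first split.
- by move=> s ->; split=> //; apply/legal_lang/legal_letter.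
- exists [:: b]; split; first exact/legal_lang/legal_letter.
  by split=> // -[/b_neq_a].
move=> w /lang_legal /legal_in_img_pow_letter [k [c [p [q pow_c]]]].
exists (size q) => n le_qn.
have [x [i [x_in def_c]]] : lang th [:: c] by apply/legal_lang/legal_letter.
pose y := window x (i + 1)%R n.+1.
have legal_cy : legal th (c :: y).
  by move: def_c (x_in i n.+2); rewrite window_cons /window /= addr0 => -[<-].
pose j := n - size q.
have [|y' [pow_y [lt_jy nth_y]]] :=
  img_pow_letter_at (y := y) (j := j) sR_in sR_gt0 sR_flexible k.
  by rewrite size_window /j; lia.
have /legal_subword legal_wua := legal_img_pow sR_in legal_cy (img_pow_cat pow_c pow_y).
exists (q ++ take j y'), [:: a]; split.
  by rewrite size_cat size_takel /j; [lia | apply: ltnW].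
split=> //; apply/legal_lang/legal_wua.
exists p, (drop j.+1 y').
by rewrite -{1}(cat_take_drop j y') (drop_nth l lt_jy) nth_y -!catA.
Qed.

End SemiMixing.

Definition fibL (e : ab) := if e is la then [:: lb; la] else [:: la].
Definition fibR (e : ab) := if e is la then [:: la; lb] else [:: la].

Lemma fib_semi_mixing : semi_mixing fib_rs 1 (fun s => s = [:: la]).
Proof.
apply: (semi_mixing_letter (sL := fibL) (sR := fibR) (l := la) (r := la)
          (tl := [:: lb]) (tr := [:: lb]) (b := lb)) => //.
- by case=> /=; auto.
- by case=> /=; auto.
- by case.
- by case.
- exists 2, la, [:: la; la; lb]; split; last by exists [::], [:: lb].
  exists [:: lb; la]; split.
    by exists [:: la]; split=> //; exists [:: lb; la], [::]; simpl; auto.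
  by exists [:: la], [:: la; lb]; split; [simpl; auto | split=> //];
    exists [:: la; lb], [::]; simpl; auto.
- by case; [exists 0, [::], [:: la] | exists 1, [::], [:: la; la; lb]].
- by case; [exists lb, [::], [::] | exists la, [:: la], [::]]; simpl; auto.
- case=> /= -[|[|j]] //= _.
  + by exists [:: la; lb]; simpl; auto.
  + by exists [:: lb; la]; simpl; auto.
  + by exists [:: la]; simpl; auto.
Qed.

Definition tribL (e : abc) :=
  match e with ta => [:: tb; ta] | tb => [:: tc; ta] | tc => [:: ta] end.
Definition tribR (e : abc) :=
  match e with ta => [:: ta; tb] | tb => [:: ta; tc] | tc => [:: ta] end.

Lemma trib_semi_mixing : semi_mixing trib_rs 1 (fun s => s = [:: ta]).
Proof.
apply: (semi_mixing_letter (sL := tribL) (sR := tribR) (l := ta) (r := ta)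
          (tl := [:: tb]) (tr := [:: tb]) (b := tb)) => //.
- by case=> /=; auto.
- by case=> /=; auto.
- by case.
- by case.
- exists 2, ta, [:: tc; ta; ta; tb]; split; last by exists [:: tc], [:: tb].
  exists [:: tb; ta]; split.
    by exists [:: ta]; split=> //; exists [:: tb; ta], [::]; simpl; auto.
  by exists [:: tc; ta], [:: ta; tb]; split; [simpl; auto | split=> //];
    exists [:: ta; tb], [::]; simpl; auto.
- case.
  + by exists 0, [::], [:: ta].
  + by exists 1, [::], [:: ta; ta; tb].
  + by exists 2, [::], [:: ta; tb; ta; ta; tb; ta; tc].
- by case; [exists tc, [::], [::] | exists ta, [:: ta], [::] | exists tb, [:: ta], [::]];
    simpl; auto.
- case=> /= -[|[|j]] //= _.
  + by exists [:: ta; tb]; simpl; auto.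
  + by exists [:: tb; ta]; simpl; auto.
  + by exists [:: ta; tc]; simpl; auto.
  + by exists [:: tc; ta]; simpl; auto.
  + by exists [:: ta]; simpl; auto.
Qed.

Lemma In_map_iota (T : Type) (f : nat -> T) n s k : s <= k < s + n ->
  List.In (f k) [seq f i | i <- iota s n].
Proof.
elim: n s => [|n IHn] s /= range_k; first lia.
by have [->|neq_ks] := eqVneq k s; [left | right; apply: IHn; lia].
Qed.

Definition metal_word m i := nseq i la ++ lb :: nseq (m - i) la.

Lemma metal_word_in m i : i <= m -> List.In (metal_word m i) (metal_rs m la).
Proof. by move=> le_im; apply: (In_map_iota (metal_word m)); lia. Qed.

Lemma size_metal_word m i : i <= m -> size (metal_word m i) = m.+1.
Proof. by move=> le_im; rewrite size_cat /= !size_nseq; lia. Qed.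

Lemma nth_metal_word m i j : j != i -> nth la (metal_word m i) j = la.
Proof.
rewrite /metal_word nth_cat size_nseq nth_nseq if_same.
case: ltngtP => // lt_ij _; rewrite -[j - i]prednK ?subn_gt0 //=.
by rewrite nth_nseq if_same.
Qed.

Definition metalL m (e : ab) := if e is la then metal_word m 0 else [:: la].
Definition metalR m (e : ab) := if e is la then metal_word m m else [:: la].

Lemma metal_semi_mixing m : 2 <= m -> semi_mixing (metal_rs m) 1 (fun s => s = [:: la]).
Proof.
case: m => [|[|n]] // _.
have metal_word0 : metal_word n.+2 0 = lb :: nseq n.+1 la ++ [:: la].
  by rewrite /metal_word subn0 -[n.+2]addn1 nseqD.
have metal_wordm : metal_word n.+2 n.+2 = la :: nseq n.+1 la ++ [:: lb].
  by rewrite /metal_word subnn.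
apply: (semi_mixing_letter (sL := metalL n.+2) (sR := metalR n.+2) (l := la) (r := la)
          (tl := lb :: nseq n.+1 la) (tr := nseq n.+1 la ++ [:: lb]) (b := lb)) => //.
- by case; [apply: (metal_word_in (i := 0)) | simpl; auto].
- by case; [apply: (metal_word_in (i := n.+2)) | simpl; auto].
- by case=> //=; rewrite size_cat.
- by case=> //=; rewrite size_cat.
- exists 1, la, (metal_word n.+2 0); split.
    by exists [:: la]; split=> //; exists (metal_word n.+2 0), [::];
      rewrite cats0; split=> //; apply: metal_word_in.
  by exists [:: lb], (nseq n la); rewrite /metal_word subn0.
- case.
  + by exists 0, [::], [:: la].
  + by exists 1, [::], (nseq n.+1 la ++ [:: la; la] ++ nseq n.+1 la ++ [:: lb]).
- case.
  + by exists lb, [::], [::]; simpl; auto.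
  + by exists la, [::], (nseq n.+2 la); apply: (metal_word_in (i := 0)).
- case=> j; last by case: j => // _; exists [:: la]; simpl; auto.
  rewrite -[metalR _ la]/(metal_word n.+2 n.+2) size_metal_word // => lt_j.
  have [->|neq_j] := eqVneq j n.+2;
    [exists (metal_word n.+2 0) | exists (metal_word n.+2 n.+2)];
    by rewrite !size_metal_word // nth_metal_word //; split=> //; apply: metal_word_in.
Qed.

Theorem mainTheorem2 :
  semi_mixing fib_rs 1 (fun s => s = [:: la]) /\
  semi_mixing trib_rs 1 (fun s => s = [:: ta]) /\
  (forall m : nat, 2 <= m -> semi_mixing (metal_rs m) 1 (fun s => s = [:: la])).
Proof.
split; first exact: fib_semi_mixing.
split; first exact: trib_semi_mixing.
exact: metal_semi_mixing.
Qed.
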